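(* Let $T_3(n)=2^n-1$ for all integers $n\ge 0$. Define $T_4:\mathbb{Z}_{\ge 0}\to\mathbb{Z}_{\ge 0}$ by $T_4(0)=0$, $T_4(1)=1$, and for $n\ge 2$, \[ T_4(n)=\min_{1\le k<n}\bigl(2\,T_4(n-k)+T_3(k)\bigr). \] For $n\ge 1$ define the balanced Frame--Stewart cost \[ FS_{\lfloor n/2\rfloor}(n)=2\,T_4(\lfloor n/2\rfloor)+T_3\bigl(n-\lfloor n/2\rfloor\bigr). \] Then $FS_{\lfloor n/2\rfloor}(n)=T_4(n)$ for every $1\le n\le 8$, and $FS_{\lfloor n/2\rfloor}(n)>T_4(n)$ for every $n\ge 9$.
   Context: $T_3(n)$ is the minimum number of moves for the three-peg Tower of Hanoi with $n$ discs, and $T_4(n)$ is the minimum number of moves for the four-peg Tower of Hanoi with $n$ discs; the latter is given by the Frame--Stewart recurrence stated in the claim (optimality of this recurrence for four pegs is a known result of Bousch). $FS_{\lfloor n/2\rfloor}(n)$ is the cost of the Frame--Stewart strategy that parks $\lfloor n/2\rfloor$ discs using four pegs, moves the remaining $n-\lfloor n/2\rfloor$ discs with three pegs, and then rebuilds the parked discs. *)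

From mathcomp Require Import all_boot.
Set Implicit Arguments. Unset Strict Implicit. Unset Printing Implicit Defensive.

Definition T3 (n : nat) : nat := 2 ^ n - 1.

(* Given the list l = [:: T4 0; ...; T4 (m-1)], compute T4 m following the
   Frame--Stewart recurrence:
     T4 0 = 0, T4 1 = 1,
     T4 m = min_{1 <= k < m} (2 * T4 (m - k) + T3 k)   for m >= 2. *)
Definition T4_next (l : seq nat) : nat :=
  let m := size l in
  if m <= 1 then m
  else \big[minn/2 * nth 0 l (m - 1) + T3 1]_(1 <= k < m) (2 * nth 0 l (m - k) + T3 k).

Fixpoint T4_table (n : nat) : seq nat :=
  match n with
  | 0 => [:: 0]
  | n'.+1 => let l := T4_table n' in rcons l (T4_next l)
  end.

Definition T4 (n : nat) : nat := last 0 (T4_table n).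

Definition FS_half (n : nat) : nat := 2 * T4 n./2 + T3 (n - n./2).

(* Parking one disc more than the balanced split, i.e. h+1 discs with h = n/2,
   changes the cost by 2 (T4 (h+1) - T4 h) - 2^(n-h-1).  The increments of T4
   are small: any split of m >= 5 discs with k parked discs yields a split of
   m+1 discs costing at most 2^(m-3) more, either by moving the extra disc with
   three pegs (extra cost 2^(m-k) with k >= 3) or, when k <= 2, by parking it
   (extra cost 2 (T4 (k+1) - T4 k) = 4).  Hence T4 (h+1) - T4 h <= 2^(h-3), and
   since n >= 2h the unbalanced split is strictly cheaper once h >= 5; the
   cases n <= 9 are computed. *)

From mathcomp Require Import all_boot all_order zify.
Import Order.TTheory.

Set Implicit Arguments.
Unset Strict Implicit.
Unset Printing Implicit Defensive.

(* FS_k(n) of the paper: k counts the parked discs, whereas the index of the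
   minimum in T4_next counts the discs moved with three pegs. *)
Definition FS (k n : nat) : nat := 2 * T4 k + T3 (n - k).

Lemma size_T4_table n : size (T4_table n) = n.+1.
Proof. by elim: n => //= n IHn; rewrite size_rcons IHn. Qed.

Lemma nth_T4_table n i : i <= n -> nth 0 (T4_table n) i = T4 i.
Proof.
elim: n => [|n IHn]; first by rewrite leqn0 => /eqP ->.
rewrite leq_eqVlt => /predU1P[->|lt_in].
  by rewrite /T4 -nth_last size_T4_table.
by rewrite /= nth_rcons size_T4_table lt_in IHn.
Qed.

Lemma T4_table_iter n :
  T4_table n = iter n (fun l => rcons l (T4_next l)) [:: 0].
Proof. by elim: n => //= n <-. Qed.

Lemma T4_small n :
  n <= 9 -> T4 n = nth 0 [:: 0; 1; 3; 5; 9; 13; 17; 25; 33; 41] n.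
Proof.
move=> le_n9; rewrite -(nth_T4_table le_n9); congr nth.
(* Unfolding T4_table directly would duplicate the shared table exponentially. *)
by rewrite T4_table_iter /T4_next unlock; vm_compute.
Qed.

Lemma T4_rec n : 1 < n -> T4 n = \big[minn/FS n.-1 n]_(1 <= k < n) FS (n - k) n.
Proof.
case: n => [//|n] lt1n.
rewrite /T4 /= last_rcons /T4_next size_T4_table leqNgt lt1n /=.
rewrite subn1 nth_T4_table // /FS subSnn.
apply: eq_big_nat => k /andP[k_gt0 lt_kn].
rewrite (subKn (ltnW lt_kn)) nth_T4_table //; lia.
Qed.

Lemma T4_le_FS n k : 0 < k < n -> T4 n <= FS k n.
Proof.
move=> /andP[k_gt0 lt_kn]; rewrite T4_rec; last by lia.
rewrite -minEnat -leEnat -[in FS k n](subKn (ltnW lt_kn)).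
by apply: ge_bigmin_seq; rewrite // mem_index_iota; lia.
Qed.

Lemma leq_T4 n m : 1 < n -> (forall k, 0 < k < n -> m <= FS k n) -> m <= T4 n.
Proof.
move=> lt1n m_le_FS; rewrite T4_rec // big_seq -minEnat -leEnat.
apply: le_bigmin => [|k]; first by apply: m_le_FS; lia.
by rewrite mem_index_iota => k_in; apply: m_le_FS; lia.
Qed.

Lemma T4_succ_le n : 4 < n -> T4 n.+1 <= T4 n + 2 ^ (n - 3).
Proof.
move=> n_gt4; rewrite addnC -leq_subLR.
apply: leq_T4 => [|k /andP[k_gt0 lt_kn]]; first by lia.
rewrite leq_subLR.
have [k_ge3|k_lt3] := leqP 3 k.
- apply: leq_trans (@T4_le_FS n.+1 k _) _; first by lia.
  have : 2 ^ (n - k) <= 2 ^ (n - 3) by rewrite leq_exp2l //; lia.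
  have : 0 < 2 ^ (n - k) by rewrite expn_gt0.
  rewrite /FS /T3 (subSn (ltnW lt_kn)) expnS; lia.
- apply: leq_trans (@T4_le_FS n.+1 k.+1 _) _; first by lia.
  have : 4 <= 2 ^ (n - 3) by rewrite -[4]/(2 ^ 2) leq_exp2l //; lia.
  rewrite /FS subSS.
  case: k k_gt0 k_lt3 lt_kn => [|[|[|]]] // _ _ _.
  all: by rewrite !T4_small //=; lia.
Qed.

Lemma FS_succ_half_lt n : 9 < n -> FS n./2.+1 n < FS_half n.
Proof.
move=> n_gt9; have := odd_double_half n; rewrite -addnn; set h := n./2 => n_eq.
have T4_incr := @T4_succ_le h ltac:(lia).
have : 2 * 2 ^ (h - 3) < 2 ^ (n - h.+1) by rewrite -expnS ltn_exp2l //; lia.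
have : 0 < 2 ^ (n - h.+1) by rewrite expn_gt0.
rewrite /FS_half /FS /T3 -/h.
have -> : n - h = (n - h.+1).+1 by lia.
rewrite expnS; lia.
Qed.

Theorem lemma3 :
  (forall n : nat, 1 <= n <= 8 -> FS_half n = T4 n) /\
  (forall n : nat, 9 <= n -> FS_half n > T4 n).
Proof.
split=> n.
- move=> /andP[n_gt0 n_le8]; rewrite /FS_half.
  case: n n_gt0 n_le8 => [|[|[|[|[|[|[|[|[|n]]]]]]]]] // _ _;
    by rewrite !T4_small.
- rewrite leq_eqVlt => /predU1P[<-|n_gt9]; first by rewrite /FS_half !T4_small.
  apply: leq_ltn_trans (FS_succ_half_lt n_gt9).
  by apply: T4_le_FS; have := odd_double_half n; lia.
Qed.
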